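(* Let $G=(\mathbb Z/a_1\mathbb Z)\times\dots\times(\mathbb Z/a_r\mathbb Z)$ be a finite Abelian group, let $f,g:G\to\mathbb C$ and let $n\ge 1$. Then $M_n(f;x_1,\dots,x_{n-1})=M_n(g;x_1,\dots,x_{n-1})$ for all $x_1,\dots,x_{n-1}\in G$ if and only if $\widehat f(x_1)\cdots\widehat f(x_n)=\widehat g(x_1)\cdots\widehat g(x_n)$ for all $x_1,\dots,x_n\in G$ with $x_1+\dots+x_n=0$.
   Context: Elements of $G$ are tuples $x=(x[1],\dots,x[r])$ with componentwise addition modulo $a_k$. Define $\chi(x,y)=\exp\left(2\pi i\sum_{k=1}^r \frac{x[k]y[k]}{a_k}\right)$. The discrete Fourier transform of $f$ is $\widehat f(x)=\sum_{y\in G}f(y)\overline{\chi(x,y)}$. The $n$-th autocorrelation is $M_n(f;x_1,\dots,x_{n-1})=\sum_{y\in G}f(y)f(y+x_1)\cdots f(y+x_{n-1})$. *)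

From HB Require Import structures.
From mathcomp Require Import all_boot all_order all_algebra.
From mathcomp Require Import complex.
From mathcomp Require Import reals trigo.
Set Implicit Arguments. Unset Strict Implicit. Unset Printing Implicit Defensive.
Import Order.TTheory GRing.Theory Num.Theory.
Local Open Scope ring_scope.
Local Open Scope complex_scope.

(* The group G = Z/a_1 x ... x Z/a_r : tuples x with x[k] in {0,..,a_k - 1}. *)
Definition Gab (r : nat) (a : 'I_r -> nat) : finType :=
  {dffun forall k : 'I_r, 'I_(a k)}.

Lemma ord_pos' (m : nat) (i : 'I_m) : (0 < m)%N.
Proof. exact: leq_ltn_trans (leq0n i) (ltn_ord i). Qed.

Definition addI (m : nat) (i j : 'I_m) : 'I_m :=
  Ordinal (ltn_pmod (i + j)%N (ord_pos' i)).

Definition addG r (a : 'I_r -> nat) (x y : Gab a) : Gab a :=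
  finfun (fun k => addI (x k) (y k)) : {dffun forall k : 'I_r, 'I_(a k)}.

Definition e2pi (R : realType) (t : R) : R[i] :=
  (cos (2 * pi * t) +i* sin (2 * pi * t))%C.

Definition chi (R : realType) r (a : 'I_r -> nat) (x y : Gab a) : R[i] :=
  e2pi (\sum_(k < r) ((nat_of_ord (x k) * nat_of_ord (y k))%:R / (a k)%:R : R)).

Definition dft (R : realType) r (a : 'I_r -> nat) (f : Gab a -> R[i]) (x : Gab a)
  : R[i] := \sum_(y : Gab a) f y * (@chi R r a x y)^*.

(* n-th autocorrelation M_n(f; x_1,...,x_{n-1}) = sum_y f(y) f(y+x_1)...f(y+x_{n-1});
   xs i stands for x_{i+1}, i < n-1 *)
Definition autocorr (R : realType) r (a : 'I_r -> nat) (n : nat)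
  (f : Gab a -> R[i]) (xs : 'I_n.-1 -> Gab a) : R[i] :=
  \sum_(y : Gab a) f y * \prod_(i < n.-1) f (addG y (xs i)).

From HB Require Import structures.
From mathcomp Require Import all_boot all_order all_algebra.
From mathcomp Require Import complex.
From mathcomp Require Import reals trigo.
From mathcomp Require Import ring lra.
Import Order.TTheory GRing.Theory Num.Theory.
Set Implicit Arguments. Unset Strict Implicit. Unset Printing Implicit Defensive.
Local Open Scope ring_scope.

(* For n = m + 1, regard x |-> M_n(f; x) as a function on G^m.  Its Fourier
   transform on G^m at u is fhat(u_1) ... fhat(u_m) fhat(-(u_1 + ... + u_m)):
   after exchanging the sums over x and y, the sum over x factors into m sums
   over G, the i-th of which is chi(u_i, y) fhat(u_i) by translation, and the
   characters chi(u_i, y) multiply to chi(u_1 + ... + u_m, y).  By Fourier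
   inversion on G^m, M_n(f) = M_n(g) iff these transforms agree, and the tuples
   (u_1, ..., u_m, -(u_1 + ... + u_m)) are exactly the n-tuples with zero sum. *)

Section Exponential.
Variable R : realType.
Implicit Types s t : R.

Lemma e2pi0 : e2pi (0 : R) = 1.
Proof. by rewrite /e2pi mulr0 cos0 sin0. Qed.

Lemma e2piD s t : e2pi (s + t) = e2pi s * e2pi t.
Proof. by rewrite /e2pi; simpc; rewrite mulrDr cosD sinD; congr (_ +i* _)%C; ring. Qed.

Lemma e2pi_nat m : e2pi (m%:R : R) = 1.
Proof.
elim: m => [|m IHm]; first exact: e2pi0.
by rewrite -addn1 natrD e2piD IHm mul1r /e2pi mulr1 mulr_natl cos2pi sin2pi.
Qed.

Lemma e2pi_neq1 t : 0 < t < 1 -> e2pi t != 1.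
Proof.
move=> /andP[t_gt0 t_lt1]; apply/eqP; rewrite /e2pi => -[].
have -> : 2 * pi * t = (pi * t) *+ 2 by rewrite mulr_natl -mulrnAl.
rewrite cos_mulr2n => cos_eq _.
have sin_gt0 : 0 < sin (pi * t).
  by apply: sin_gt0_pi; rewrite mulr_gt0 ?pi_gt0 //= -[ltRHS]mulr1 ltr_pM2l ?pi_gt0.
have := sin2cos2 (pi * t).
have -> : cos (pi * t) ^+ 2 = 1 by move: cos_eq; lra.
by rewrite subrr => /eqP; rewrite sqrf_eq0 => /eqP sin0; rewrite sin0 ltxx in sin_gt0.
Qed.

Lemma mul_conj_e2pi t : (e2pi t)^* * e2pi t = 1.
Proof.
rewrite /e2pi -[Num.conj _]/(conjc _); simpc; congr (_ +i* _)%C; last by ring.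
by rewrite -!expr2 cos2Dsin2.
Qed.

End Exponential.

Section ExtendLast.
Variables (T V : Type) (idx : V) (op : Monoid.law idx) (m : nat) (H : T -> V).

Definition extend_last (u : 'I_m -> T) (z : T) (j : 'I_m.+1) : T :=
  if unlift ord_max j is Some i then u i else z.

Lemma big_extend_last u z :
  \big[op/idx]_(j < m.+1) H (extend_last u z j) = op (\big[op/idx]_(i < m) H (u i)) (H z).
Proof.
rewrite big_ord_recr /extend_last unlift_none; congr (op _ _); apply: eq_bigr => i _.
have -> : widen_ord (leqnSn m) i = lift ord_max i by apply: ord_inj; rewrite lift_max.
by rewrite liftK.
Qed.

End ExtendLast.

Section FiniteAbelianGroup.
Variables (r : nat) (a : 'I_r -> nat).
Hypothesis a_gt0 : forall k, (0 < a k)%N.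
Local Notation G := (Gab a).
Implicit Types x y z : G.

Definition zeroG : G := finfun (fun k => Ordinal (a_gt0 k)).
Definition oppG x : G := finfun (fun k => Ordinal (ltn_pmod (a k - x k)%N (a_gt0 k))).
Definition sumG m (u : 'I_m -> G) : G := \big[@addG r a/zeroG]_(i < m) u i.

Lemma Gab_inj x y : (forall k, x k = y k :> nat) -> x = y.
Proof. by move=> eq_xy; apply/ffunP => k; apply/val_inj; exact: eq_xy. Qed.

Lemma addGE x y k : (addG x y k = (x k + y k) %% a k :> nat)%N.
Proof. by rewrite ffunE. Qed.

Lemma zeroGE k : (zeroG k = 0 :> nat)%N.
Proof. by rewrite ffunE. Qed.

Lemma oppGE x k : (oppG x k = (a k - x k) %% a k :> nat)%N.
Proof. by rewrite ffunE. Qed.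

Lemma sumGE m (u : 'I_m -> G) k : (sumG u k = (\sum_(i < m) u i k) %% a k :> nat)%N.
Proof.
elim: m u => [|m IHm] u; first by rewrite /sumG !big_ord0 zeroGE mod0n.
by rewrite /sumG !big_ord_recl addGE -/(sumG _) IHm modnDmr.
Qed.

Lemma addGC x y : addG x y = addG y x.
Proof. by apply: Gab_inj => k; rewrite !addGE addnC. Qed.

Lemma addGA x y z : addG x (addG y z) = addG (addG x y) z.
Proof. by apply: Gab_inj => k; rewrite !addGE modnDmr modnDml addnA. Qed.

Lemma add0G x : addG zeroG x = x.
Proof. by apply: Gab_inj => k; rewrite addGE zeroGE add0n modn_small. Qed.

HB.instance Definition _ := Monoid.isComLaw.Build G zeroG (@addG r a) addGA addGC add0G.

Lemma addNG x : addG (oppG x) x = zeroG.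
Proof.
by apply: Gab_inj => k; rewrite addGE oppGE zeroGE modnDml subnK ?modnn // ltnW.
Qed.

Lemma addGN x : addG x (oppG x) = zeroG.
Proof. by rewrite addGC addNG. Qed.

Lemma addKG x y : addG (oppG x) (addG x y) = y.
Proof. by rewrite addGA addNG add0G. Qed.

Lemma addG_eq0 x y : (addG x y = zeroG) <-> (y = oppG x).
Proof.
split=> [xy0 | ->]; last by rewrite addGC addNG.
by rewrite -(addKG x y) xy0 addGC add0G.
Qed.

Lemma oppGK x : oppG (oppG x) = x.
Proof. by apply/esym/addG_eq0; rewrite addNG. Qed.

Lemma sumG_eq0 m (u : 'I_m -> G) :
  (sumG u = zeroG) <-> (forall k, (\sum_(i < m) u i k) %% a k = 0)%N.
Proof.
split=> [u0 k | u0]; first by rewrite -sumGE u0 zeroGE.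
by apply: Gab_inj => k; rewrite sumGE zeroGE u0.
Qed.

Lemma sum_addG (V : nmodType) (F : G -> V) z : \sum_y F (addG z y) = \sum_y F y.
Proof.
have addG_inj : injective (addG z) by move=> x y /(congr1 (addG (oppG z))); rewrite !addKG.
by rewrite [RHS](reindex_inj addG_inj).
Qed.

Lemma eq_prod_zero_sum (S : pzSemiRingType) m (F F' : G -> S) :
  (forall xs : 'I_m.+1 -> G, sumG xs = zeroG -> \prod_j F (xs j) = \prod_j F' (xs j)) <->
  (forall u : {ffun 'I_m -> G},
     \prod_i F (u i) * F (oppG (sumG u)) = \prod_i F' (u i) * F' (oppG (sumG u))).
Proof.
split=> [eqF u | eqF xs xs_sum0].
  have := eqF (extend_last u (oppG (sumG u))); rewrite !big_extend_last; apply.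
  by rewrite /sumG (big_extend_last _ id); apply: addGN.
pose u := [ffun i => xs (widen_ord (leqnSn m) i)].
have xs_max : xs ord_max = oppG (sumG u).
  apply/addG_eq0; rewrite -xs_sum0 /sumG [RHS]big_ord_recr /=.
  by congr addG; apply: eq_bigr => i _; rewrite ffunE.
have prodE (H : G -> S) : \prod_j H (xs j) = \prod_i H (u i) * H (oppG (sumG u)).
  by rewrite big_ord_recr xs_max; congr (_ * _); apply: eq_bigr => i _; rewrite ffunE.
by rewrite !prodE eqF.
Qed.

Section Characters.
Variable R : realType.
Local Notation ch := (@chi R r a).

Lemma chiE x y : ch x y = \prod_k e2pi ((x k * y k)%N%:R / (a k)%:R).
Proof. by rewrite /chi (big_morph _ (@e2piD R) (e2pi0 R)). Qed.

Lemma chiC x y : ch x y = ch y x.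
Proof. by rewrite !chiE; apply: eq_bigr => k _; rewrite mulnC. Qed.

Lemma chiDr x y z : ch x (addG y z) = ch x y * ch x z.
Proof.
rewrite !chiE -big_split /=; apply: eq_bigr => k _; rewrite addGE -e2piD.
have a_neq0 : (a k)%:R != 0 :> R by rewrite pnatr_eq0 -lt0n.
rewrite -mulrDl -natrD -mulnDr {2}(divn_eq (y k + z k) (a k)) mulnDr mulnA.
by rewrite natrD mulrDl (natrM _ _ (a k)) mulfK // e2piD e2pi_nat mul1r.
Qed.

Lemma chiDl x y z : ch (addG x y) z = ch x z * ch y z.
Proof. by rewrite chiC chiDr !(chiC z). Qed.

Lemma chi0r x : ch x zeroG = 1.
Proof. by rewrite chiE big1 // => k _; rewrite zeroGE muln0 mul0r e2pi0. Qed.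

Lemma chi0l y : ch zeroG y = 1.
Proof. by rewrite chiC chi0r. Qed.

Lemma chi_sumG m (u : 'I_m -> G) y : ch (sumG u) y = \prod_i ch (u i) y.
Proof. rewrite /sumG; exact: (big_morph (ch^~ y) (fun x x' => chiDl x x' y) (chi0l y)). Qed.

Lemma mul_conj_chi x y : (ch x y)^* * ch x y = 1.
Proof. by rewrite chiE rmorph_prod -big_split; apply: big1 => k _; apply: mul_conj_e2pi. Qed.

Lemma conj_chi x y : (ch x y)^* = ch x (oppG y).
Proof.
by rewrite -[LHS]mulr1 -(chi0r x) -(addGN y) chiDr mulrA mul_conj_chi mul1r.
Qed.

Lemma conj_chiNl x y : (ch (oppG x) y)^* = ch x y.
Proof. by rewrite chiC conj_chi oppGK chiC. Qed.

Lemma chi_nontrivial y : y != zeroG -> exists e, ch e y != 1.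
Proof.
move=> y_neq0; have [k yk_neq0 | y0] := pickP (fun k => y k != 0%N :> nat); last first.
  by case/eqP: y_neq0; apply: Gab_inj => k; rewrite zeroGE; apply/eqP/negbFE/y0.
have ak_gt1 : (1 < a k)%N by apply: leq_ltn_trans (ltn_ord (y k)); rewrite lt0n.
(* e is the k-th unit vector, so ch e y = e2pi (y_k / a_k) with 0 < y_k / a_k < 1. *)
pose e : G := finfun (fun j => Ordinal (ltn_pmod (j == k) (a_gt0 j))).
exists e; rewrite chiE (bigD1 k) //= big1 ?mulr1 => [|j /negbTE jk]; last first.
  by rewrite ffunE /= jk mod0n mul0n mul0r e2pi0.
rewrite ffunE /= eqxx modn_small // mul1n; apply: e2pi_neq1.
by rewrite divr_gt0 ?ltr0n ?a_gt0 ?lt0n //= ltr_pdivrMr ?ltr0n // mul1r ltr_nat.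
Qed.

Lemma sum_chi y : \sum_x ch x y = if y == zeroG then #|G|%:R else 0.
Proof.
have [-> | /chi_nontrivial[e chi_e]] := eqVneq y zeroG.
  by rewrite (eq_bigr (fun _ => 1)) ?sumr_const // => x _; rewrite chi0r.
(* translating by e multiplies the sum by ch e y != 1 *)
have : \sum_x ch x y = ch e y * \sum_x ch x y.
  by rewrite -{1}(sum_addG (ch^~ y) e) mulr_sumr; apply: eq_bigr => x _; rewrite chiDl.
move/eqP; rewrite -subr_eq0 -{1}(mul1r (\sum_x _)) -mulrBl mulf_eq0 subr_eq0.
by rewrite eq_sym (negbTE chi_e) => /eqP.
Qed.

Lemma chi_orthogonal x z :
  \sum_v (ch v x)^* * ch v z = if z == x then #|G|%:R else 0.
Proof.
have -> : (z == x) = (addG (oppG x) z == zeroG).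
  by apply/eqP/eqP => [-> | /addG_eq0]; [rewrite addNG | rewrite oppGK].
by rewrite -sum_chi; apply: eq_bigr => v _; rewrite conj_chi -chiDr addGC.
Qed.

(* [dft] is defined with [conjc]; this restates it with [Num.conj]. *)
Lemma dftE (f : G -> R[i]) w : dft f w = \sum_y f y * (ch w y)^*.
Proof. by []. Qed.

Lemma dft_translate (f : G -> R[i]) w y :
  \sum_z f (addG y z) * (ch w z)^* = ch w y * dft f w.
Proof.
rewrite dftE -(sum_addG (fun z => f z * (ch w z)^*) y) mulr_sumr.
apply: eq_bigr => z _; rewrite chiDr rmorphM /= -[LHS]mulr1 -(mul_conj_chi w y); ring.
Qed.

Lemma autocorr_ffun m (f : G -> R[i]) (xs : 'I_m -> G) :
  autocorr (n := m.+1) f (finfun xs) = autocorr (n := m.+1) f xs.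
Proof. by apply: eq_bigr => y _; congr (_ * _); apply: eq_bigr => i _; rewrite ffunE. Qed.

Definition dft_tuple m (F : {ffun 'I_m -> G} -> R[i]) (u : {ffun 'I_m -> G}) : R[i] :=
  \sum_x F x * \prod_i (ch (u i) (x i))^*.

Lemma dft_tuple_autocorr m (f : G -> R[i]) (u : {ffun 'I_m -> G}) :
  dft_tuple (fun x : {ffun 'I_m -> G} => autocorr (n := m.+1) f x) u =
  \prod_i dft f (u i) * dft f (oppG (sumG u)).
Proof.
have inner y : \sum_(x : {ffun 'I_m -> G}) \prod_i (f (addG y (x i)) * (ch (u i) (x i))^*)
    = \prod_i ch (u i) y * \prod_i dft f (u i).
  rewrite -big_split /=; under [RHS]eq_bigr => i _ do rewrite -dft_translate.
  by rewrite bigA_distr_bigA.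
rewrite /dft_tuple /autocorr; under [LHS]eq_bigr => x _ do rewrite mulr_suml.
rewrite exchange_big /= mulrC dftE mulr_suml; apply: eq_bigr => y _.
under eq_bigr => x _ do rewrite -mulrA -big_split.
by rewrite -mulr_sumr inner -chi_sumG conj_chiNl mulrA.
Qed.

Lemma chi_orthogonal_tuple m (x z : {ffun 'I_m -> G}) :
  \sum_(u : {ffun 'I_m -> G}) \prod_i ((ch (u i) (x i))^* * ch (u i) (z i)) =
  if z == x then #|G|%:R ^+ m else 0.
Proof.
transitivity (\prod_i \sum_v (ch v (x i))^* * ch v (z i)); first by rewrite bigA_distr_bigA.
under eq_bigr => i _ do rewrite chi_orthogonal.
have [-> | z_neq_x] := eqVneq z x.
  by rewrite (eq_bigr (fun=> #|G|%:R)) ?prodr_const ?card_ord // => i _; rewrite eqxx.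
have [i /negbTE zi_neq_xi] : exists i, z i != x i.
  apply/existsP; apply: contraNT z_neq_x => /existsPn eq_zx.
  by apply/eqP/ffunP => i; apply/eqP/negbNE/eq_zx.
by rewrite (bigD1 i) //= zi_neq_xi mul0r.
Qed.

Lemma dft_tuple_inversion m (F : {ffun 'I_m -> G} -> R[i]) (z : {ffun 'I_m -> G}) :
  \sum_u dft_tuple F u * \prod_i ch (u i) (z i) = #|G|%:R ^+ m * F z.
Proof.
have sum_u (x : {ffun 'I_m -> G}) :
    \sum_(u : {ffun 'I_m -> G}) F x * \prod_i (ch (u i) (x i))^* * \prod_i ch (u i) (z i)
    = F x * (if z == x then #|G|%:R ^+ m else 0).
  by rewrite -chi_orthogonal_tuple mulr_sumr; apply: eq_bigr => u _; rewrite big_split mulrA.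
rewrite /dft_tuple; under eq_bigr => u _ do rewrite mulr_suml.
rewrite exchange_big /=; under eq_bigr => x _ do rewrite sum_u.
rewrite (bigD1 z) //= eqxx big1 ?addr0 1?mulrC // => x.
by rewrite eq_sym => /negbTE ->; rewrite mulr0.
Qed.

Lemma dft_tuple_inj m (F F' : {ffun 'I_m -> G} -> R[i]) :
  dft_tuple F =1 dft_tuple F' -> F =1 F'.
Proof.
move=> eq_dft_tuple z; have card_neq0 : #|G|%:R ^+ m != 0 :> R[i].
  by rewrite expf_neq0 // pnatr_eq0 -lt0n; apply/card_gt0P; exists zeroG.
apply: (mulfI card_neq0); rewrite -!dft_tuple_inversion.
by apply: eq_bigr => u _; rewrite eq_dft_tuple.
Qed.

End Characters.
End FiniteAbelianGroup.

Theorem corollary1 (R : realType) (r : nat) (a : 'I_r -> nat)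
  (ha : forall k, (0 < a k)%N) (f g : Gab a -> R[i]) (n : nat) (hn : (1 <= n)%N) :
  (forall xs : 'I_n.-1 -> Gab a, autocorr f xs = autocorr g xs) <->
  (forall xs : 'I_n -> Gab a,
     (forall k : 'I_r, (\sum_(j < n) nat_of_ord (xs j k)) %% a k = 0)%N ->
     \prod_(j < n) dft f (xs j) = \prod_(j < n) dft g (xs j)).
Proof.
case: n hn => // m _.
pose M (h : Gab a -> R[i]) (x : {ffun 'I_m -> Gab a}) := autocorr (n := m.+1) h x.
have eqM_dft : (forall xs : 'I_m.+1.-1 -> Gab a, autocorr f xs = autocorr g xs) <->
    (forall u, dft_tuple (M f) u = dft_tuple (M g) u).
  split=> [eqM u | /(dft_tuple_inj ha) eqM xs]; first by apply: eq_bigr => x _; rewrite /M eqM.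
  by rewrite -(autocorr_ffun f) -(autocorr_ffun g); apply: eqM.
split=> [/eqM_dft eq_dft_tuple xs /(sumG_eq0 ha) | eq_prod].
  move: xs; apply/(eq_prod_zero_sum ha) => u.
  by rewrite -!dft_tuple_autocorr; apply: eq_dft_tuple.
apply/eqM_dft => u; rewrite !dft_tuple_autocorr; move: u.
by apply/(eq_prod_zero_sum ha) => xs /(sumG_eq0 ha); apply: eq_prod.
Qed.
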